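(* For $n\ge 1$ let $X(n)$ be the $\Delta$-complex with vertex set $\{-n,-(n-1),\dots,-1,1,2,\dots,n\}$ which has one $p$-simplex for every ordered sequence $(a_0,\dots,a_p)$ of $p+1$ vertices whose absolute values $|a_0|,\dots,|a_p|$ are pairwise distinct, the faces of this simplex being the simplices given by the ordered subsequences. Then $X(n)$ is $(n-1)$-spherical.
   Context: A polyhedron $Y$ is called $d$-spherical if $Y$ is nonempty and its reduced integral homology satisfies $\tilde H_i(Y)=0$ for all $i\neq d$. *)

From HB Require Import structures.
From mathcomp Require Import all_boot all_order all_algebra.
Set Implicit Arguments. Unset Strict Implicit. Unset Printing Implicit Defensive.
Import Order.TTheory GRing.Theory Num.Theory.
Local Open Scope ring_scope.

(* Vertices of X(n): the vertex  (b, k)  stands for  +(k+1)  if b = true and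
   -(k+1) if b = false; its absolute value is k+1, encoded by k : 'I_n. *)
Definition vert (n : nat) := (bool * 'I_n)%type.

Definition simplex (n p : nat) :=
  {t : p.+1.-tuple (vert n) | uniq (map snd (tval t))}.

Definition chain (n p : nat) := simplex n p -> int.

Definition drop_at (T : Type) (i : nat) (s : seq T) : seq T :=
  take i s ++ drop i.+1 s.

Definition bd (n p : nat) (c : chain n p.+1) : chain n p :=
  fun tau => \sum_(sigma : simplex n p.+1) \sum_(i < p.+2)
     (if tval (sval tau) == drop_at i (tval (sval sigma))
      then (-1) ^+ i * c sigma else 0).

Definition aug (n : nat) (c : chain n 0) : int := \sum_(sigma : simplex n 0) c sigma.

Definition red_homology_vanishes (n i : nat) : Prop :=
  match i with
  | 0%N => forall c : chain n 0, aug c = 0 ->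
            exists d : chain n 1, forall tau, bd d tau = c tau
  | k.+1 => forall c : chain n k.+1, (forall tau, bd c tau = 0) ->
            exists d : chain n k.+2, forall tau, bd d tau = c tau
  end.

Definition spherical (n d : nat) : Prop :=
  (exists v : simplex n 0, True) /\
  (forall i : nat, i <> d -> red_homology_vanishes n i).

From mathcomp Require Import all_boot all_order all_algebra zify.
Set Implicit Arguments. Unset Strict Implicit. Unset Printing Implicit Defensive.
Import GRing.Theory.
Local Open Scope ring_scope.

(* Chains are extended by zero to functions on all words over the vertices,
   the empty word sitting in degree -1 so that the augmentation becomes part of
   the boundary. For a set F of absolute values, let d_F count only the faces
   that delete a vertex whose absolute value lies in F. A d_F-cycle supported on
   words with fewer than |F| letters of absolute value in F is a d_F-boundary,
   by induction on |F|: for a in F, the part of the cycle on words containing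
   +-a is a d_(F\a)-cycle, and d_F agrees with d_(F\a) on such words, so after
   subtracting a boundary the cycle vanishes on words containing +-a and is
   then the boundary of its cone with apex +a. For F = {1,...,n} the support
   condition only says that the words have fewer than n letters, which holds
   in every degree except n-1. *)

Lemma sum_antisym_pairs_eq0 (M : zmodType) (N : nat) (G : nat -> nat -> M) :
  (forall i j, (j <= i <= N)%N -> G i j = - G j i.+1) ->
  \sum_(0 <= i < N.+1) \sum_(0 <= j < N.+2) G i j = 0.
Proof.
move=> GN.
pose H := \sum_(0 <= i < N.+1) \sum_(0 <= j < N.+1 | (i <= j)%N) G i j.+1.
have upper : \sum_(0 <= i < N.+1) \sum_(0 <= j < N.+2 | ~~ (j <= i)%N) G i j = H.
  rewrite /H; apply: eq_bigr => i _.
  rewrite big_mkcond big_nat_recl //= add0r [RHS]big_mkcond.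
  by apply: eq_bigr => j _; rewrite -leqNgt.
have lower : \sum_(0 <= i < N.+1) \sum_(0 <= j < N.+2 | (j <= i)%N) G i j = - H.
  rewrite (exchange_big_dep_nat xpredT) //= big_nat_recr //= [X in _ + X]big_nat_cond.
  rewrite [X in _ + X]big1 ?addr0 => [|i /andP[/andP[_ ltiN] /(leq_trans ltiN)]]; last by rewrite ltnn.
  rewrite /H -sumrN; apply: eq_bigr => i _.
  rewrite -sumrN big_nat_cond [RHS]big_nat_cond.
  by apply: eq_bigr => j /andP[/andP[_ ltjN] leij]; rewrite GN // leij -ltnS.
rewrite (eq_bigr _ (fun i _ => bigID (fun j => (j <= i)%N) _ _)) big_split /=.
by rewrite upper lower addNr.
Qed.

Lemma count_setD1_lt (T : finType) (F : {set T}) a s : a \in F -> a \in s ->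
  (count (mem (F :\ a)) s < count (mem F) s)%N.
Proof.
move=> aF; elim: s => //= x s IHs; rewrite in_cons => /predU1P[<- | /IHs lt_s].
  by rewrite setD11 aF ltnS sub_count // => y /setD1P[].
by rewrite in_setD1 -addnS leq_add //; case: (x != a); case: (x \in F).
Qed.

Section InsertAt.
Variable T : Type.

Fixpoint insert_at (i : nat) (v : T) (s : seq T) : seq T :=
  match i, s with
  | 0%N, _ => v :: s
  | i'.+1, x :: s' => x :: insert_at i' v s'
  | _.+1, [::] => [:: v]
  end.

Lemma size_insert_at i v s : size (insert_at i v s) = (size s).+1.
Proof. by elim: s i => [|x s IHs] [|i] //=; rewrite IHs. Qed.

Lemma insert_atC j i w v t : (j <= i <= size t)%N ->
  insert_at j w (insert_at i v t) = insert_at i.+1 v (insert_at j w t).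
Proof.
elim: t i j => [|x t IHt] [|i] [|j] //=; first by rewrite andbF.
by move=> le_jit; rewrite IHt.
Qed.

Lemma drop_at_insert_at i v t : (i <= size t)%N -> drop_at i (insert_at i v t) = t.
Proof. by rewrite /drop_at; elim: t i => [|x t IHt] [|i] //= le_it; rewrite IHt. Qed.

Lemma nth_insert_at x0 i v t : (i <= size t)%N -> nth x0 (insert_at i v t) i = v.
Proof. by elim: t i => [|x t IHt] [|i] //= le_it; rewrite IHt. Qed.

Lemma insert_at_drop_at x0 i s : (i < size s)%N ->
  insert_at i (nth x0 s i) (drop_at i s) = s.
Proof. by rewrite /drop_at; elim: s i => [|x s IHs] [|i] //= lt_is; rewrite ?drop0 ?IHs. Qed.

End InsertAt.

Section EqInsertAt.
Variable T : eqType.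

Lemma perm_insert_at i v (s : seq T) : perm_eq (insert_at i v s) (v :: s).
Proof.
elim: s i => [|x s IHs] [|i] //=.
have := IHs i; rewrite -(perm_cons x) => /perm_trans; apply.
by rewrite (perm_catCA [:: x] [:: v] s).
Qed.

Lemma eq_insert_at x0 i v (s t : seq T) : (i <= size t)%N -> size s = (size t).+1 ->
  (s == insert_at i v t) = (t == drop_at i s) && (v == nth x0 s i).
Proof.
move=> le_it size_s; apply/eqP/andP => [->|[/eqP -> /eqP ->]].
  by rewrite drop_at_insert_at ?nth_insert_at.
by rewrite insert_at_drop_at // size_s.
Qed.

End EqInsertAt.

Section WordChains.
Variable n : nat.
Local Notation V := (vert n).

Definition keys (w : seq V) : seq 'I_n := map snd w.

Lemma uniq_keys_insert_at i v s : uniq (keys (insert_at i v s)) = uniq (keys (v :: s)).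
Proof. exact/perm_uniq/perm_map/perm_insert_at. Qed.

Lemma mem_keys_insert_at a i v s :
  (a \in keys (insert_at i v s)) = (a == v.2) || (a \in keys s).
Proof. by rewrite (perm_mem (perm_map snd (perm_insert_at i v s))) inE. Qed.

Definition bd_in (F : {set 'I_n}) (C : seq V -> int) (t : seq V) : int :=
  \sum_(0 <= i < (size t).+1) \sum_(v : V | v.2 \in F) (-1) ^+ i * C (insert_at i v t).

Definition uniq_supported (C : seq V -> int) := forall w, ~~ uniq (keys w) -> C w = 0.

Lemma uniq_supported_bd_in F C : uniq_supported C -> uniq_supported (bd_in F C).
Proof.
move=> suppC w nuniq_w; rewrite /bd_in big1 // => i _; rewrite big1 // => v _.
by rewrite suppC ?mulr0 // uniq_keys_insert_at /= negb_and nuniq_w orbT.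
Qed.

Lemma eq_bd_in F C D t : (forall w, size w = (size t).+1 -> C w = D w) ->
  bd_in F C t = bd_in F D t.
Proof.
move=> eqCD; apply: eq_bigr => i _; apply: eq_bigr => v _.
by rewrite eqCD // size_insert_at.
Qed.

Lemma bd_inD F C D t : bd_in F (fun w => C w + D w) t = bd_in F C t + bd_in F D t.
Proof.
rewrite /bd_in -big_split; apply: eq_bigr => i _; rewrite -big_split.
by apply: eq_bigr => v _; rewrite mulrDr.
Qed.

Lemma bd_inB F C D t : bd_in F (fun w => C w - D w) t = bd_in F C t - bd_in F D t.
Proof.
rewrite /bd_in -sumrB; apply: eq_bigr => i _; rewrite -sumrB.
by apply: eq_bigr => v _; rewrite mulrBr.
Qed.

Lemma bd_in0 F t : bd_in F (fun _ => 0) t = 0.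
Proof. by rewrite /bd_in big1 // => i _; rewrite big1 // => v _; rewrite mulr0. Qed.

Lemma bd_in_bd_in F C t : bd_in F (bd_in F C) t = 0.
Proof.
pose G i j := \sum_(v : V | v.2 \in F) \sum_(w : V | w.2 \in F)
  (-1) ^+ (i + j) * C (insert_at j w (insert_at i v t)).
have -> : bd_in F (bd_in F C) t =
    \sum_(0 <= i < (size t).+1) \sum_(0 <= j < (size t).+2) G i j.
  apply: eq_bigr => i _; rewrite /G exchange_big /=; apply: eq_bigr => v _.
  rewrite /bd_in size_insert_at mulr_sumr; apply: eq_bigr => j _.
  rewrite mulr_sumr; apply: eq_bigr => w _.
  by rewrite exprD mulrA.
apply: sum_antisym_pairs_eq0 => i j /andP[le_ji le_it].
rewrite /G exchange_big -sumrN; apply: eq_bigr => w _.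
rewrite -sumrN; apply: eq_bigr => v _.
by rewrite insert_atC ?le_ji // addnS exprS mulN1r mulNr opprK addnC.
Qed.

Definition restrict_key (a : 'I_n) (C : seq V -> int) w := if a \in keys w then C w else 0.

Definition cone (a : 'I_n) (C : seq V -> int) w :=
  if w is v :: w' then (if (v == (true, a)) && (a \notin keys w') then C w' else 0) else 0.

Lemma uniq_supported_restrict_key a C : uniq_supported C -> uniq_supported (restrict_key a C).
Proof. by move=> suppC w nuniq_w; rewrite /restrict_key suppC ?if_same. Qed.

Lemma uniq_supported_cone a C : uniq_supported C -> uniq_supported (cone a C).
Proof.
move=> suppC [|v w] //= nuniq_vw; case: ifP => // /andP[/eqP def_v a_w].
by apply: suppC; move: nuniq_vw; rewrite def_v /= a_w.
Qed.

Lemma cone_cons a C v w : (forall w, a \in keys w -> C w = 0) ->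
  cone a C (v :: w) = if v == (true, a) then C w else 0.
Proof. by move=> Ca0 /=; case: (v == _) => //=; case: ifPn => // /negPn /Ca0 ->. Qed.

Lemma bd_in_cone (F : {set 'I_n}) a C : a \in F -> (forall w, a \in keys w -> C w = 0) ->
  (forall t, bd_in F C t = 0) -> forall t, bd_in F (cone a C) t = C t.
Proof.
move=> aF Ca0 cycC t; rewrite /bd_in big_nat_recl // expr0.
rewrite (bigD1 (true, a)) ?aF // cone_cons // eqxx mul1r big1 /= ?addr0; last first.
  by move=> v /andP[_ /negbTE ->]; rewrite mul1r.
case: t => [|x t]; first by rewrite big_geq ?addr0.
rewrite -[RHS]addr0; congr (_ + _).
have [-> | x_a] := eqVneq x (true, a); last first.
  by rewrite big1 // => i _; rewrite big1 // => v _; rewrite cone_cons // (negbTE x_a) mulr0.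
rewrite -[RHS]oppr0 -[in RHS](cycC t) /bd_in -sumrN; apply: eq_bigr => i _.
by rewrite -sumrN; apply: eq_bigr => v _; rewrite cone_cons // eqxx exprS mulN1r mulNr.
Qed.

Lemma bd_in_restrict_key G a C t : a \in keys t ->
  bd_in G (restrict_key a C) t = bd_in G C t.
Proof.
move=> a_t; apply: eq_bigr => i _; apply: eq_bigr => v _.
by rewrite /restrict_key mem_keys_insert_at a_t orbT.
Qed.

Lemma bd_in_restrict_key_out (G : {set 'I_n}) a C t : a \notin G -> a \notin keys t ->
  bd_in G (restrict_key a C) t = 0.
Proof.
move=> aG a_t; rewrite /bd_in big1 // => i _; rewrite big1 // => v vG.
rewrite /restrict_key mem_keys_insert_at (negbTE a_t) orbF.
case: eqP => [a_v | _]; last by rewrite mulr0.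
by rewrite a_v vG in aG.
Qed.

Lemma bd_in_setD1 a F C t : uniq_supported C -> a \in keys t ->
  bd_in F C t = bd_in (F :\ a) C t.
Proof.
move=> suppC a_t; apply: eq_bigr => i _; rewrite [in RHS]big_mkcond [in LHS]big_mkcond.
apply: eq_bigr => v _; rewrite in_setD1; case: (eqVneq v.2 a) => //= v_a.
by rewrite suppC ?mulr0 ?if_same // uniq_keys_insert_at /= v_a a_t.
Qed.

Lemma bd_in_exact F C : uniq_supported C -> (forall t, bd_in F C t = 0) ->
    (forall w, C w != 0 -> (count (mem F) (keys w) < #|F|)%N) ->
  exists2 E, uniq_supported E & forall t, bd_in F E t = C t.
Proof.
have [k] := ubnP #|F|; elim: k => // k IHk in F C *; rewrite ltnS => le_F_k.
move=> suppC cycC countC; have [F0 | [a aF]] := set_0Vmem F.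
  exists (fun _ => 0) => // t; rewrite bd_in0; apply/esym/eqP.
  by apply: contraNT (countC t) _; rewrite F0 cards0.
have card_Fa : #|F| = #|F :\ a|.+1 by rewrite (cardsD1 a) aF.
have [E1 suppE1 bdE1] : exists2 E, uniq_supported E &
    forall t, bd_in (F :\ a) E t = restrict_key a C t.
  apply: IHk; first by rewrite -ltnS -card_Fa.
  - exact: uniq_supported_restrict_key.
  - move=> t; have [a_t | a_t] := boolP (a \in keys t); last first.
      by rewrite bd_in_restrict_key_out ?setD11.
    by rewrite bd_in_restrict_key // -(@bd_in_setD1 a).
  - move=> w; rewrite /restrict_key; case: ifP => // a_w /countC.
    by rewrite card_Fa ltnS; apply/leq_trans/count_setD1_lt.
have suppE1a := uniq_supported_restrict_key a suppE1.
pose C' w := C w - bd_in F (restrict_key a E1) w.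
have C'_a w : a \in keys w -> C' w = 0.
  move=> a_w; rewrite /C' (@bd_in_setD1 a) // bd_in_restrict_key //.
  by rewrite bdE1 /restrict_key a_w subrr.
exists (fun w : seq V => restrict_key a E1 w + cone a C' w).
  move=> w nuniq_w; rewrite suppE1a // uniq_supported_cone ?addr0 // => u nuniq_u.
  by rewrite /C' suppC // uniq_supported_bd_in ?subr0.
move=> t; rewrite bd_inD bd_in_cone // => [|u]; first by rewrite /C' addrC subrK.
by rewrite bd_inB cycC bd_in_bd_in subr0.
Qed.

Definition chain_ext p (c : chain n p) (w : seq V) : int :=
  \sum_(s : simplex n p) if tval (sval s) == w then c s else 0.

Lemma chain_ext_simplex p (c : chain n p) s : chain_ext c (tval (sval s)) = c s.
Proof.
rewrite /chain_ext (bigD1 s) //= eqxx big1 ?addr0 // => s' s'_s.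
by case: eqP => // /val_inj/val_inj eq_s'; rewrite eq_s' eqxx in s'_s.
Qed.

Lemma chain_ext_out p (c : chain n p) w :
  ~~ ((size w == p.+1) && uniq (keys w)) -> chain_ext c w = 0.
Proof.
move=> not_simplex; rewrite /chain_ext big1 // => -[t uniq_t] _ /=.
by case: eqP => // def_w; rewrite -def_w size_tuple eqxx uniq_t in not_simplex.
Qed.

Lemma uniq_supported_chain_ext p (c : chain n p) : uniq_supported (chain_ext c).
Proof. by move=> w nuniq_w; rewrite chain_ext_out // negb_and nuniq_w orbT. Qed.

Lemma simplex_of_word p w : size w = p.+1 -> uniq (keys w) ->
  exists s : simplex n p, tval (sval s) = w.
Proof. by move=> /eqP size_w uniq_w; exists (exist _ (Tuple size_w) uniq_w). Qed.

Lemma chain_ext_restrict p (E : seq V -> int) w : uniq_supported E -> size w = p.+1 ->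
  chain_ext (fun s : simplex n p => E (tval (sval s))) w = E w.
Proof.
move=> suppE size_w; have [uniq_w | nuniq_w] := boolP (uniq (keys w)).
  by have [s <-] := simplex_of_word size_w uniq_w; rewrite chain_ext_simplex.
by rewrite chain_ext_out ?suppE // negb_and nuniq_w orbT.
Qed.

Lemma bd_chain_ext p (c : chain n p.+1) (tau : simplex n p) :
  bd c tau = bd_in setT (chain_ext c) (tval (sval tau)).
Proof.
rewrite /bd /bd_in size_tuple big_mkord exchange_big /=; apply: eq_bigr => i _.
have le_i_tau : (i <= size (tval (sval tau)))%N by rewrite size_tuple -ltnS.
under [RHS]eq_bigl do rewrite in_setT.
rewrite (eq_bigr _ (fun v _ => mulr_sumr _ _ _ _)) exchange_big /=; apply: eq_bigr => s _.
have x0 := tnth (sval s) ord0.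
have size_s : size (tval (sval s)) = (size (tval (sval tau))).+1 by rewrite !size_tuple.
rewrite (bigD1 (nth x0 (tval (sval s)) i)) //= big1 ?addr0 => [|v v_s].
  by rewrite (eq_insert_at x0 _ le_i_tau size_s) eqxx andbT; case: eqP; rewrite ?mulr0.
by rewrite (eq_insert_at x0 _ le_i_tau size_s) (negbTE v_s) andbF mulr0.
Qed.

Lemma aug_chain_ext (c : chain n 0) : aug c = bd_in setT (chain_ext c) [::].
Proof.
rewrite /aug /bd_in big_nat1; under [RHS]eq_bigl do rewrite in_setT.
under [RHS]eq_bigr do rewrite expr0 mul1r.
rewrite exchange_big; apply: eq_bigr => -[[[|x [|y r]] size_s] uniq_s] //= _.
rewrite (bigD1 x) //= eqxx big1 ?addr0 // => v.
by rewrite eqseq_cons andbT eq_sym => /negbTE ->.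
Qed.

Lemma bd_in_chain_ext_out F q (c : chain n q) t :
  ~~ ((size t == q) && uniq (keys t)) -> bd_in F (chain_ext c) t = 0.
Proof.
move=> not_face; rewrite /bd_in big1 // => i _; rewrite big1 // => v _.
rewrite chain_ext_out ?mulr0 // size_insert_at uniq_keys_insert_at eqSS.
by apply: contra not_face => /andP[-> /andP[]].
Qed.

Lemma exact_below_top p (c : chain n p) : p.+1 != n ->
    (forall t, bd_in setT (chain_ext c) t = 0) ->
  exists d : chain n p.+1, forall tau, bd d tau = c tau.
Proof.
move=> ne_p_n cycc.
have [E suppE bdE] : exists2 E, uniq_supported E & forall t, bd_in setT E t = chain_ext c t.
  apply: bd_in_exact (uniq_supported_chain_ext c) cycc _ => w cw.
  have /andP[/eqP size_w uniq_w] : (size w == p.+1) && uniq (keys w).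
    by apply: contraNT cw => /chain_ext_out ->.
  rewrite cardsT card_ord; apply: leq_ltn_trans (count_size _ _) _.
  rewrite ltn_neqAle size_map size_w ne_p_n -size_w -(size_map snd w) -(card_uniqP uniq_w).
  by rewrite -[n in (_ <= n)%N]card_ord max_card.
exists (fun s : simplex n p.+1 => E (tval (sval s))) => tau.
rewrite bd_chain_ext (eq_bd_in _ (D := E)) ?bdE ?chain_ext_simplex // => w size_w.
by rewrite chain_ext_restrict // size_w size_tuple.
Qed.

End WordChains.

Theorem mainTheorem6 (n : nat) (hn : (1 <= n)%N) : spherical n (n - 1).
Proof.
split; first by have [s _] := @simplex_of_word n 0 [:: (true, Ordinal hn)] erefl erefl; exists s.
case=> [|k] ne_k_top c.
  move=> aug_c; apply: exact_below_top; first by apply/eqP; lia.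
  by case=> [|x t]; [rewrite -aug_chain_ext | rewrite bd_in_chain_ext_out].
move=> cycc; apply: exact_below_top; first by apply/eqP; lia.
move=> t; have [/andP[/eqP size_t uniq_t] | not_face] := boolP ((size t == k.+1) && uniq (keys t)).
  by have [tau <-] := simplex_of_word size_t uniq_t; rewrite -bd_chain_ext cycc.
exact: bd_in_chain_ext_out.
Qed.
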